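(* With $\ell_n=\Psi(L_n)$, $z_n=\Psi(Z_n)$, $h_n=\Psi(H_n)$ for $n\ge1$ and $\ell_0=z_0=h_0=1$: (i) $\ell_n=4\ell_{n-1}+\ell_{n-4}+\ell_{n-5}$ for $n\ge5$, with $\ell_0=1,\ell_1=5,\ell_2=20,\ell_3=79,\ell_4=317$; (ii) $z_n=3z_{n-1}+z_{n-2}+6z_{n-3}+7z_{n-4}+7z_{n-5}+5z_{n-6}+z_{n-7}$ for $n\ge7$, with $z_0=1,z_1=5,z_2=20,z_3=75,z_4=288,z_5=1105,z_6=4234$; (iii) $h_n=h_{n-1}+7h_{n-2}+12h_{n-3}+6h_{n-4}+7h_{n-5}+4h_{n-6}+2h_{n-7}$ for $n\ge7$, with $h_0=1,h_1=5,h_2=20,h_3=75,h_4=288,h_5=1094,h_6=4171$.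
   Context: A matching of a graph is a set of pairwise vertex-disjoint edges; it is maximal if it is not a proper subset of another matching. $\Psi(G)$ is the number of maximal matchings of $G$. A benzenoid system is a connected plane graph without cut-vertices in which every bounded face is a hexagon, any two hexagonal faces being either disjoint or sharing exactly one edge (then they are adjacent). It is catacondensed if no vertex lies in three hexagons, and a benzenoid chain if moreover no hexagon is adjacent to three other hexagons; its length is its number of hexagons. In a chain, the two hexagons adjacent to only one other hexagon are terminal, the rest interior. An interior hexagon has exactly two vertices of degree 2; it is straight if these are non-adjacent and kinky if they are adjacent. $L_n$ (polyacene) is the benzenoid chain of length $n$ all of whose interior hexagons are straight. $Z_n$ (zig-zag polyphenacene) is the benzenoid chain of length $n$ with all interior hexagons kinky and successive kinks turning alternately in opposite directions; $H_n$ (helicene) is the one of length $n$ with all interior hexagons kinky and all kinks turning in the same direction (viewed as an abstract graph). *)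

From mathcomp Require Import all_boot.
Set Implicit Arguments. Unset Strict Implicit. Unset Printing Implicit Defensive.

Definition is_matching (V : finType) (e : rel V) (M : {set {set V}}) : bool :=
  [forall E in M, exists u, exists v, e u v && (E == [set u; v])] &&
  [forall E in M, forall F in M, (E != F) ==> [disjoint E & F]].

Definition is_maximal_matching (V : finType) (e : rel V) (M : {set {set V}}) : bool :=
  is_matching e M &&
  [forall M' : {set {set V}}, (is_matching e M' && (M \subset M')) ==> (M' == M)].

Definition Psi (V : finType) (e : rel V) : nat :=
  #|[set M : {set {set V}} | is_maximal_matching e M]|.

(** Benzenoid chains of length n, built hexagon by hexagon on vertices
    0 .. 4n+1.  Vertices 0,1 form an edge of the first hexagon.  Hexagon k
    (k = 0..n-1) is the cycle a_k, 4k+2, 4k+3, 4k+4, 4k+5, b_k, where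
    (a_0,b_0) = (0,1) and hexagon k+1 is glued along the edge
    (4k+2+j, 4k+3+j) of hexagon k, with j = js k in {0,1,2}:
    j = 1 makes hexagon k straight, j = 0 / j = 2 make it kinky turning
    to one side / the other. *)
Definition attach (js : nat -> nat) (k : nat) : nat * nat :=
  if k is k'.+1 then (4 * k' + 2 + js k', 4 * k' + 3 + js k') else (0, 1).

Definition hex_edges (js : nat -> nat) (k : nat) : seq (nat * nat) :=
  let: (a, b) := attach js k in
  [:: (a, 4 * k + 2); (4 * k + 2, 4 * k + 3); (4 * k + 3, 4 * k + 4);
      (4 * k + 4, 4 * k + 5); (4 * k + 5, b)].

Definition chain_edges (js : nat -> nat) (n : nat) : seq (nat * nat) :=
  (0, 1) :: flatten [seq hex_edges js k | k <- iota 0 n].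

Definition chain_rel (js : nat -> nat) (n : nat) : rel 'I_(4 * n + 2) :=
  fun u v => ((val u, val v) \in chain_edges js n) ||
             ((val v, val u) \in chain_edges js n).

Arguments chain_rel js n : clear implicits.

(** L_n: all interior hexagons straight. *)
Definition polyacene_js (k : nat) : nat := 1.
(** Z_n: all interior hexagons kinky, kinks alternating in direction. *)
Definition zigzag_js (k : nat) : nat := if odd k then 2 else 0.
(** H_n: all interior hexagons kinky, kinks all in the same direction. *)
Definition helicene_js (k : nat) : nat := 0.

Definition ell (n : nat) : nat := if n is 0 then 1 else Psi (chain_rel polyacene_js n).
Definition zz (n : nat) : nat := if n is 0 then 1 else Psi (chain_rel zigzag_js n).
Definition hh (n : nat) : nat := if n is 0 then 1 else Psi (chain_rel helicene_js n).

From mathcomp Require Import all_boot zify.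
Set Implicit Arguments. Unset Strict Implicit. Unset Printing Implicit Defensive.

(* Transfer-matrix method.  A set of edges of a chain is a bit mask over its
   edge list, and it is a maximal matching iff it is a matching and every edge
   meets a matched vertex.  The hexagon added after hexagon [k] only meets the
   chain in the vertices [4k+2 .. 4k+5], so whether a prefix of the mask extends
   to a maximal matching depends only on a six-bit boundary (which of these
   vertices are matched, and whether the two edges linking hexagon [k] to its
   predecessor still need to be dominated), together with the parity of [k],
   which fixes the next kink of L_n, Z_n and H_n.  Hence Psi of the chain of
   length [k+1] is a fixed row vector times [T^k w] for a 128 x 128 transfer
   matrix [T], and a linear relation among the vectors [T^i w], checked by
   computation, is a linear recurrence for the sequence. *)

Definition incident (v : nat) (p : nat * nat) : bool := (p.1 == v) || (p.2 == v).

Definition edge_disjoint (p q : nat * nat) : bool :=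
  ~~ incident p.1 q && ~~ incident p.2 q.

Definition edge_key (p : nat * nat) : nat * nat := (minn p.1 p.2, maxn p.1 p.2).

Definition edge_set N (p : nat * nat) : {set 'I_N} :=
  [set u : 'I_N | incident (val u) p].

Definition covered (E : seq (nat * nat)) (b : seq bool) (v : nat) : bool :=
  has (incident v) (mask b E).

Definition maximal_mask (E : seq (nat * nat)) (b : seq bool) : bool :=
  pairwise edge_disjoint (mask b E) &&
  all (fun p => covered E b p.1 || covered E b p.2) E.

Lemma edge_disjointC p q : edge_disjoint p q = edge_disjoint q p.
Proof. by rewrite /edge_disjoint /incident; case: p q => [p1 p2] [q1 q2] /=; lia. Qed.

Lemma disjointP (T : finType) (A B : {set T}) :
  reflect (forall x, x \in A -> x \in B -> False) [disjoint A & B].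
Proof.
rewrite disjoint_subset; apply: (iffP subsetP) => H x.
  by move=> /H; rewrite inE => /negP.
by move=> xA; rewrite inE; apply/negP => /(H x xA).
Qed.

Lemma pairwise_in (T : eqType) (r : rel T) (s : seq T) x y :
  symmetric r -> pairwise r s -> x \in s -> y \in s -> x != y -> r x y.
Proof.
move=> rC; elim: s => //= z s IH /andP [/allP rz rs].
rewrite !inE => /orP [/eqP -> | xs] /orP [/eqP -> | ys].
- by rewrite eqxx.
- by move=> _; apply: rz.
- by move=> _; rewrite rC; apply: rz.
- exact: IH.
Qed.

Lemma pairwise_uniq_map (T K : eqType) (f : T -> K) (r : rel T) (s : seq T) :
  uniq (map f s) -> {in s &, forall x y, f x != f y -> r x y} -> pairwise r s.
Proof.
elim: s => //= z s IH /andP [zs us] H; apply/andP; split.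
  apply/allP => y ys; apply: H; rewrite ?inE ?eqxx ?ys ?orbT //.
  by apply: contra zs => /eqP ->; apply: map_f.
by apply: IH => // x y xs ys; apply: H; rewrite inE ?xs ?ys orbT.
Qed.

Section EdgeSets.
Variable N : nat.

Lemma edge_set_ord (u v : 'I_N) : edge_set N (val u, val v) = [set u; v].
Proof.
by apply/setP => x; rewrite !inE /incident /= !val_eqE (eq_sym u) (eq_sym v).
Qed.

Lemma edge_set_key p q : p.1 < N -> p.2 < N -> q.1 < N -> q.2 < N ->
  edge_set N p = edge_set N q -> edge_key p = edge_key q.
Proof.
case: p q => [p1 p2] [q1 q2] /= p1N p2N q1N q2N epq.
have same x : x < N -> incident x (p1, p2) = incident x (q1, q2).
  by move=> xN; have := congr1 (fun A : {set 'I_N} => Ordinal xN \in A) epq; rewrite !inE.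
move: (same _ p1N) (same _ p2N) (same _ q1N) (same _ q2N).
rewrite /incident /edge_key /= !eqxx ?orbT => h1 h2 h3 h4.
by apply/eqP; rewrite xpair_eqE; lia.
Qed.

Lemma disjoint_edge_set p q : p.1 < N -> p.2 < N ->
  [disjoint edge_set N p & edge_set N q] = edge_disjoint p q.
Proof.
case: p => [p1 p2] /= p1N p2N; apply/disjointP/idP.
  move=> H; rewrite /edge_disjoint /=; apply/andP; split; apply/negP => hq.
    by apply: (H (Ordinal p1N)); rewrite inE // /incident /= eqxx.
  by apply: (H (Ordinal p2N)); rewrite inE // /incident /= eqxx orbT.
rewrite /edge_disjoint /= => /andP [n1 n2] x; rewrite !inE => /orP [] /eqP ex.
  by rewrite -ex in n1 *; rewrite (negbTE n1).
by rewrite -ex in n2 *; rewrite (negbTE n2).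
Qed.

Lemma maximal_matchingP (e : rel 'I_N) M : is_matching e M ->
  reflect (forall u v, e u v -> [set u; v] \notin M ->
             exists2 Y, Y \in M & ~~ [disjoint [set u; v] & Y])
          (is_maximal_matching e M).
Proof.
move=> hM; rewrite /is_maximal_matching hM /=.
have [/forallP Medge /forallP Mdisj] := andP hM.
apply: (iffP forallP) => [maximalM u v euv uvM | extendM M'].
  apply/exists_inP; apply: contraT; rewrite negb_exists_in => /forall_inP free.
  have uvM' : is_matching e ([set u; v] |: M).
    apply/andP; split.
      apply/forall_inP => X /setU1P [-> | XM]; last by have /implyP := Medge X; apply.
      by apply/existsP; exists u; apply/existsP; exists v; rewrite euv eqxx.
    apply/forall_inP => X /setU1P [-> | XM]; apply/forall_inP => Y /setU1P [-> | YM];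
      apply/implyP => XY.
    - by rewrite eqxx in XY.
    - by have := free Y YM; rewrite negbK.
    - by have := free X XM; rewrite negbK disjoint_sym.
    - by have /implyP/(_ XM)/forall_inP/(_ Y YM)/implyP := Mdisj X; apply.
  have /implyP := maximalM ([set u; v] |: M).
  by rewrite uvM' subsetUr => /(_ isT)/eqP eqM; move: uvM; rewrite -eqM setU11.
apply/implyP => /andP [hM' sMM']; rewrite eqEsubset sMM' andbT.
apply/subsetP => X XM'; have [/forallP M'edge /forallP M'disj] := andP hM'.
have /implyP/(_ XM')/existsP [u /existsP [v /andP [euv /eqP eX]]] := M'edge X.
apply: contraT => XM; have uvM : [set u; v] \notin M by rewrite -eX.
have [Y YM nd] := extendM u v euv uvM.
have YM' : Y \in M' by apply: (subsetP sMM').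
have XY : X != Y by apply: contraNneq XM => ->.
have /implyP/(_ XM')/forall_inP/(_ Y YM')/implyP/(_ XY) := M'disj X.
by rewrite -eX in nd; rewrite (negbTE nd).
Qed.

End EdgeSets.

Fixpoint bool_seqs (k : nat) : seq (seq bool) :=
  if k is k'.+1 then [seq rcons l x | l <- bool_seqs k', x <- [:: false; true]]
  else [:: [::]].

Lemma bool_seqsS k :
  bool_seqs k.+1 = [seq rcons l x | l <- bool_seqs k, x <- [:: false; true]].
Proof. by []. Qed.

Lemma uniq_bool_seqs k : uniq (bool_seqs k).
Proof.
elim: k => // k IH; rewrite bool_seqsS; apply: allpairs_uniq => //.
by move=> [l x] [l' x'] _ _ /= /rcons_inj.
Qed.

Lemma mem_bool_seqs k l : (l \in bool_seqs k) = (size l == k).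
Proof.
elim: k l => [|k IH] l; first by case: l.
rewrite bool_seqsS; apply/allpairsP/idP => [[[l' x] [/= l'k _ ->]] | ].
  by rewrite size_rcons eqSS -IH.
case/lastP: l => [|l x] //; rewrite size_rcons eqSS => lk.
by exists (l, x); split => //=; [rewrite IH | case: x].
Qed.

Lemma card_bool_tuples k (P : pred (seq bool)) :
  #|[set b : k.-tuple bool | P b]| = \sum_(l <- bool_seqs k) P l.
Proof.
rewrite cardsE -sum1_card big_mkcond /= -big_enum /=.
rewrite (eq_bigr (fun b : k.-tuple bool => nat_of_bool (P b))); last first.
  by move=> b _; rewrite unfold_in; case: (P b).
rewrite -(big_map val xpredT (fun l => nat_of_bool (P l))).
apply: perm_big; apply: uniq_perm.
- by rewrite map_inj_uniq ?enum_uniq //; apply: val_inj.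
- exact: uniq_bool_seqs.
move=> l; rewrite mem_bool_seqs; apply/mapP/eqP => [[b _ ->] | lk].
  by rewrite size_tuple.
by exists (Tuple (introT eqP lk)); rewrite ?mem_enum.
Qed.

Lemma big_bool_seqsD k m (F : seq bool -> nat) :
  \sum_(l <- bool_seqs (k + m)) F l =
  \sum_(l <- bool_seqs k) \sum_(t <- bool_seqs m) F (l ++ t).
Proof.
elim: m F => [|m IH] F.
  by rewrite addn0; apply: eq_bigr => l _; rewrite big_seq1 cats0.
rewrite addnS bool_seqsS big_allpairs_dep IH; apply: eq_bigr => l _.
rewrite bool_seqsS big_allpairs_dep; apply: eq_bigr => t _.
by apply: eq_bigr => x _; rewrite rcons_cat.
Qed.

Section MaskEncoding.
Variables (N : nat) (e : rel 'I_N) (E : seq (nat * nat)).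
Hypothesis e_edges : forall u v, e u v = ((val u, val v) \in E) || ((val v, val u) \in E).
Hypothesis E_bounded : all (fun p => (p.1 < N) && (p.2 < N)) E.
Hypothesis E_uniq : uniq (map edge_key E).

Definition mask_matching (b : seq bool) : {set {set 'I_N}} :=
  [set X : {set 'I_N} | has (fun p => edge_set N p == X) (mask b E)].

Definition matching_mask (M : {set {set 'I_N}}) : seq bool :=
  map (fun p => edge_set N p \in M) E.

Lemma mem_mask_matching b X :
  (X \in mask_matching b) = has (fun p => edge_set N p == X) (mask b E).
Proof. by rewrite inE. Qed.

Lemma edge_bounded p : p \in E -> p.1 < N /\ p.2 < N.
Proof. by move=> pE; have /allP/(_ p pE)/andP := E_bounded. Qed.

Lemma edge_set_ord_of p (pE : p \in E) :
  edge_set N p = [set Ordinal (edge_bounded pE).1; Ordinal (edge_bounded pE).2].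
Proof. by rewrite -edge_set_ord /= -surjective_pairing. Qed.

Lemma edge_ord_of p (pE : p \in E) :
  e (Ordinal (edge_bounded pE).1) (Ordinal (edge_bounded pE).2).
Proof. by rewrite e_edges /= -surjective_pairing pE. Qed.

Lemma edge_of_edge_set u v : e u v -> exists2 p, p \in E & edge_set N p = [set u; v].
Proof.
rewrite e_edges => /orP [uvE | vuE]; first by exists (val u, val v); rewrite // edge_set_ord.
by exists (val v, val u); rewrite // edge_set_ord setUC.
Qed.

Lemma matching_edge_set M X : is_matching e M -> X \in M ->
  exists2 p, p \in E & X = edge_set N p.
Proof.
case/andP => /forall_inP Medge _ /Medge /existsP [u /existsP [v /andP [euv /eqP ->]]].
by have [p pE <-] := edge_of_edge_set euv; exists p.
Qed.

Lemma matching_maskK M : is_matching e M -> mask_matching (matching_mask M) = M.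
Proof.
move=> hM; apply/setP => X; rewrite inE -filter_mask; apply/hasP/idP.
  by case=> p; rewrite mem_filter => /andP [pM _] /eqP <-.
move=> XM; have [p pE Xp] := matching_edge_set hM XM.
by exists p; rewrite ?mem_filter -?Xp ?XM ?pE ?eqxx.
Qed.

Lemma mask_matchingK b : size b = size E -> matching_mask (mask_matching b) = b.
Proof.
rewrite /matching_mask /mask_matching.
elim: E E_bounded E_uniq b => [|p E' IH] + + [|x b] //= => /andP [/andP [p1N p2N] E'N].
move=> /andP [pE' E'uniq] [sb].
have key_ne q : q \in E' -> (edge_set N q == edge_set N p) = false.
  move=> qE'; apply/negbTE/negP => /eqP eqp; have /allP/(_ q qE')/andP [q1N q2N] := E'N.
  by move: pE'; rewrite -(edge_set_key q1N q2N p1N p2N eqp) map_f.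
have p_out : has (fun q => edge_set N q == edge_set N p) (mask b E') = false.
  by apply/hasP => -[q /mem_mask qE']; rewrite key_ne.
congr cons; first by case: x; rewrite !inE /= ?eqxx.
apply: etrans (IH E'N E'uniq b sb); apply/eq_in_map => q qE'.
by rewrite !inE; case: x => //=; rewrite eq_sym key_ne.
Qed.

Lemma is_matching_mask_matching b :
  is_matching e (mask_matching b) = pairwise edge_disjoint (mask b E).
Proof.
have edges_ok : [forall X in mask_matching b, exists u, exists v, e u v && (X == [set u; v])].
  apply/forall_inP => X; rewrite mem_mask_matching => /hasP [p /mem_mask pE /eqP <-].
  apply/existsP; exists (Ordinal (edge_bounded pE).1).
  apply/existsP; exists (Ordinal (edge_bounded pE).2).
  by rewrite (edge_ord_of pE) (edge_set_ord_of pE) eqxx.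
rewrite /is_matching edges_ok /=; apply/forall_inP/idP => [disj | pw X].
  apply: (pairwise_uniq_map (f := edge_key)); first by rewrite map_mask mask_uniq.
  move=> x y xb yb xy; have [x1N x2N] := edge_bounded (mem_mask xb).
  have [y1N y2N] := edge_bounded (mem_mask yb).
  have xM : edge_set N x \in mask_matching b.
    by rewrite mem_mask_matching; apply/hasP; exists x.
  have yM : edge_set N y \in mask_matching b.
    by rewrite mem_mask_matching; apply/hasP; exists y.
  have /forall_inP/(_ _ yM)/implyP := disj _ xM.
  rewrite -(disjoint_edge_set y x1N x2N); apply.
  by apply: contra xy => /eqP/(edge_set_key x1N x2N y1N y2N)->.
rewrite mem_mask_matching => /hasP [p pb /eqP <-].
apply/forall_inP => Y; rewrite mem_mask_matching => /hasP [q qb /eqP <-].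
apply/implyP => pq; have [p1N p2N] := edge_bounded (mem_mask pb).
rewrite disjoint_edge_set //; apply: (pairwise_in edge_disjointC pw pb qb).
by apply: contraNneq pq => ->.
Qed.

Lemma is_maximal_mask_matching b :
  is_maximal_matching e (mask_matching b) = maximal_mask E b.
Proof.
rewrite /maximal_mask -is_matching_mask_matching.
have [hM | ] := boolP (is_matching e (mask_matching b)); last first.
  by rewrite /is_maximal_matching => /negbTE ->.
apply/(maximal_matchingP hM)/allP => [extend p pE | dominated u v euv uv_out].
  have [p1N p2N] := edge_bounded pE.
  have [Y YM meetY] : exists2 Y, Y \in mask_matching b & ~~ [disjoint edge_set N p & Y].
    rewrite (edge_set_ord_of pE).
    set uv := [set _; _]; have [pM | ] := boolP (uv \in mask_matching b).
      exists uv => //; rewrite -setI_eq0 setIid; apply/set0Pn.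
      by exists (Ordinal (edge_bounded pE).1); rewrite !inE eqxx.
    exact: extend (edge_ord_of pE).
  move: YM; rewrite mem_mask_matching => /hasP [q qb /eqP eqY].
  move: meetY; rewrite -eqY disjoint_edge_set //.
  rewrite /edge_disjoint negb_and !negbK /covered => /orP [] pq.
    by apply/orP; left; apply/hasP; exists q.
  by apply/orP; right; apply/hasP; exists q.
have [p pE epuv] := edge_of_edge_set euv; have [p1N p2N] := edge_bounded pE.
have touch x : has (incident x) (mask b E) -> incident x p ->
    exists2 Y, Y \in mask_matching b & ~~ [disjoint [set u; v] & Y].
  move=> /hasP [q qb xq] xp; exists (edge_set N q).
    by rewrite mem_mask_matching; apply/hasP; exists q.
  rewrite -epuv disjoint_edge_set // /edge_disjoint negb_and !negbK.
  by move: xp xq; rewrite /incident => /orP [] /eqP <- ->; rewrite ?orbT.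
by case/orP: (dominated p pE) => hc; apply: (touch _ hc); rewrite /incident eqxx ?orbT.
Qed.

Lemma Psi_maximal_masks : Psi e = \sum_(b <- bool_seqs (size E)) maximal_mask E b.
Proof.
rewrite -card_bool_tuples /Psi.
have -> : [set M | is_maximal_matching e M] =
          [set mask_matching (val b) | b in [set b : (size E).-tuple bool | maximal_mask E b]].
  apply/setP => M; rewrite inE; apply/idP/imsetP => [hM | [b]]; last first.
    by rewrite inE -is_maximal_mask_matching => ? ->.
  have hm : is_matching e M by case/andP: hM.
  have sz : size (matching_mask M) == size E by rewrite size_map.
  exists (Tuple sz); last by rewrite /= matching_maskK.
  by rewrite inE -is_maximal_mask_matching /= matching_maskK.
rewrite card_in_imset // => b1 b2 _ _ eqb; apply: val_inj.
by rewrite /= -(mask_matchingK (size_tuple b1)) eqb mask_matchingK ?size_tuple.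
Qed.

End MaskEncoding.

Lemma chain_edgesS js k : chain_edges js k.+1 = chain_edges js k ++ hex_edges js k.
Proof.
rewrite /chain_edges.
have -> : iota 0 k.+1 = iota 0 k ++ [:: k] by rewrite -addn1 iotaD.
by rewrite map_cat flatten_cat /= cats0.
Qed.

Lemma hex_edgesE js k : hex_edges js k =
  [:: ((attach js k).1, 4 * k + 2); (4 * k + 2, 4 * k + 3); (4 * k + 3, 4 * k + 4);
      (4 * k + 4, 4 * k + 5); (4 * k + 5, (attach js k).2)].
Proof. by rewrite /hex_edges; case: (attach js k). Qed.

Lemma size_chain_edges js k : size (chain_edges js k) = 5 * k + 1.
Proof. by elim: k => [|k IH] //; rewrite chain_edgesS size_cat IH hex_edgesE /=; lia. Qed.

Lemma covered_cat E F b t v : size b = size E ->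
  covered (E ++ F) (b ++ t) v = covered E b v || covered F t v.
Proof. by move=> sb; rewrite /covered mask_cat // has_cat. Qed.

Lemma covered5 e1 e2 e3 e4 e5 t1 t2 t3 t4 t5 v :
  covered [:: e1; e2; e3; e4; e5] [:: t1; t2; t3; t4; t5] v =
  [|| t1 && incident v e1, t2 && incident v e2, t3 && incident v e3,
      t4 && incident v e4 | t5 && incident v e5].
Proof. by case: t1; case: t2; case: t3; case: t4; case: t5; rewrite /covered /= ?orbF. Qed.

Lemma all_mask5 (P : pred (nat * nat)) e1 e2 e3 e4 e5 t1 t2 t3 t4 t5 :
  all P (mask [:: t1; t2; t3; t4; t5] [:: e1; e2; e3; e4; e5]) =
  [&& t1 ==> P e1, t2 ==> P e2, t3 ==> P e3, t4 ==> P e4 & t5 ==> P e5].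
Proof. by case: t1; case: t2; case: t3; case: t4; case: t5; rewrite /= ?andbT. Qed.

Lemma pairwise_mask5 (r : rel (nat * nat)) e1 e2 e3 e4 e5 t1 t2 t3 t4 t5 :
  pairwise r (mask [:: t1; t2; t3; t4; t5] [:: e1; e2; e3; e4; e5]) =
  [&& t1 && t2 ==> r e1 e2, t1 && t3 ==> r e1 e3, t1 && t4 ==> r e1 e4,
      t1 && t5 ==> r e1 e5, t2 && t3 ==> r e2 e3, t2 && t4 ==> r e2 e4,
      t2 && t5 ==> r e2 e5, t3 && t4 ==> r e3 e4, t3 && t5 ==> r e3 e5
    & t4 && t5 ==> r e4 e5].
Proof. by case: t1; case: t2; case: t3; case: t4; case: t5; rewrite /= ?andbT -?andbA. Qed.

Lemma allrel_edge_disjoint (s1 s2 : seq (nat * nat)) :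
  allrel edge_disjoint s1 s2 =
  all (fun q => ~~ has (incident q.1) s1 && ~~ has (incident q.2) s1) s2.
Proof.
rewrite allrelC; apply: eq_all => q /=.
elim: s1 => //= p s1 ->; move: (has (incident q.1) s1) (has (incident q.2) s1) => h1 h2.
rewrite /edge_disjoint /incident; case: p q => [p1 p2] [q1 q2] /=.
rewrite ![q1 == _]eq_sym ![q2 == _]eq_sym.
by case: (p1 == q1); case: (p1 == q2); case: (p2 == q1); case: (p2 == q2); case: h1; case: h2.
Qed.

(* A boundary [(c1, c2, c3, c4, na, nb)] of a chain whose last hexagon is [k]
   records in [ci] whether vertex [4k+1+i] is matched, and in [na] ([nb])
   whether the edge joining [4k+2] ([4k+5]) to the previous hexagon still has
   both ends unmatched, so that only the next hexagon can dominate it. *)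
Definition boundary := (bool * bool * bool * bool * bool * bool)%type.

Definition frontier_covered (j : nat) (s : boundary) : bool :=
  let: (c1, c2, c3, c4, _, _) := s in
  match j with 0 => c1 | 1 => c2 | 2 => c3 | _ => c4 end.

Definition closing_ok (s : boundary) : bool :=
  let: (c1, c2, c3, c4, na, nb) := s in
  [&& na ==> c1, nb ==> c4, c1 || c2, c2 || c3 & c3 || c4].

(* The next hexagon is glued along [(4k+2+j, 4k+3+j)], and [t] selects among
   its five new edges, listed as in [hex_edges]. *)
Definition step_ok (j : nat) (s : boundary) (t : seq bool) : bool :=
  let: (c1, c2, c3, c4, na, nb) := s in
  let t1 := nth false t 0 in let t2 := nth false t 1 in let t3 := nth false t 2 in
  let t4 := nth false t 3 in let t5 := nth false t 4 in
  let ca := frontier_covered j s in let cb := frontier_covered j.+1 s in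
  let d1 := [|| c1, t1 && (j == 0) | t5 && (j.+1 == 0)] in
  let d2 := [|| c2, t1 && (j == 1) | t5 && (j.+1 == 1)] in
  let d3 := [|| c3, t1 && (j == 2) | t5 && (j.+1 == 2)] in
  let d4 := [|| c4, t1 && (j == 3) | t5 && (j.+1 == 3)] in
  [&& ~~ (t1 && t2), ~~ (t2 && t3), ~~ (t3 && t4), ~~ (t4 && t5),
      ~~ (t1 && ca), ~~ (t5 && cb), na ==> d1, nb ==> d4,
      d1 || d2, d2 || d3 & d3 || d4].

Definition step_boundary (j : nat) (s : boundary) (t : seq bool) : boundary :=
  let t1 := nth false t 0 in let t2 := nth false t 1 in let t3 := nth false t 2 in
  let t4 := nth false t 3 in let t5 := nth false t 4 in
  (t1 || t2, t2 || t3, t3 || t4, t4 || t5,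
   ~~ (t1 || t2) && ~~ (frontier_covered j s || t1),
   ~~ (t4 || t5) && ~~ (frontier_covered j.+1 s || t5)).

Definition truth_table_eq13 (F G : bool -> bool -> bool -> bool -> bool -> bool -> bool ->
                                 bool -> bool -> bool -> bool -> bool -> bool -> bool) :=
  all (fun l => let x i := nth false l i in
                F (x 0) (x 1) (x 2) (x 3) (x 4) (x 5) (x 6) (x 7) (x 8) (x 9) (x 10) (x 11) (x 12)
             == G (x 0) (x 1) (x 2) (x 3) (x 4) (x 5) (x 6) (x 7) (x 8) (x 9) (x 10) (x 11) (x 12))
      (bool_seqs 13).

Lemma truth_table_eq13P F G : truth_table_eq13 F G ->
  forall a1 a2 a3 a4 a5 a6 a7 a8 a9 a10 a11 a12 a13,
    F a1 a2 a3 a4 a5 a6 a7 a8 a9 a10 a11 a12 a13 = G a1 a2 a3 a4 a5 a6 a7 a8 a9 a10 a11 a12 a13.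
Proof.
move=> /allP FG a1 a2 a3 a4 a5 a6 a7 a8 a9 a10 a11 a12 a13; apply/eqP.
by apply: (FG [:: a1; a2; a3; a4; a5; a6; a7; a8; a9; a10; a11; a12; a13]); rewrite mem_bool_seqs.
Qed.

Ltac decide_nat_tests := repeat match goal with
 | |- context [@eq_op ?T ?u ?v] =>
     let _ := constr:(u : nat) in let _ := constr:(v : nat) in
     first [ have -> : (u == v) = true by lia | have -> : (u == v) = false by lia ]
 | |- context [?u <= ?v] =>
     first [ have -> : (u <= v) = true by lia | have -> : (u <= v) = false by lia ]
 end.

Section Chain.
Variable js : nat -> nat.
Hypothesis js_le2 : forall i, js i <= 2.

Lemma attach_lt k : ((attach js k).1 < 4 * k + 2) && ((attach js k).2 < 4 * k + 2).
Proof. by case: k => [|k] //=; have := js_le2 k; lia. Qed.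

Lemma chain_edges_bounded k :
  all (fun p => (p.1 < 4 * k + 2) && (p.2 < 4 * k + 2)) (chain_edges js k).
Proof.
elim: k => [|k IH] //; rewrite chain_edgesS all_cat; apply/andP; split.
  by apply: sub_all IH => p; lia.
by have := attach_lt k; rewrite hex_edgesE /=; lia.
Qed.

Lemma uniq_chain_edge_keys k : uniq (map edge_key (chain_edges js k)).
Proof.
elim: k => [|k IH] //; rewrite chain_edgesS map_cat cat_uniq IH andTb.
have /andP [a_lt b_lt] := attach_lt k.
have new_keys : map edge_key (hex_edges js k) =
  [:: ((attach js k).1, 4 * k + 2); (4 * k + 2, 4 * k + 3); (4 * k + 3, 4 * k + 4);
      (4 * k + 4, 4 * k + 5); ((attach js k).2, 4 * k + 5)].
  by rewrite hex_edgesE /edge_key /=; repeat (apply: congr2; try lia).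
rewrite new_keys; apply/andP; split.
  apply/negP => /hasP [x new_x /mapP [q qE xq]]; move: new_x.
  have /allP/(_ q qE) := chain_edges_bounded k.
  by rewrite xq /edge_key !inE !xpair_eqE; lia.
by rewrite /= !inE !xpair_eqE; lia.
Qed.

Definition frontier k v := (4 * k + 2 <= v) && (v <= 4 * k + 5).

Definition partial_ok k b :=
  let E := chain_edges js k.+1 in
  pairwise edge_disjoint (mask b E) &&
  all (fun p => [|| covered E b p.1, covered E b p.2, frontier k p.1 | frontier k p.2]) E.

Definition boundary_of k b : boundary :=
  let c := covered (chain_edges js k.+1) b in
  (c (4 * k + 2), c (4 * k + 3), c (4 * k + 4), c (4 * k + 5),
   ~~ c (4 * k + 2) && ~~ c (attach js k).1, ~~ c (4 * k + 5) && ~~ c (attach js k).2).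

Lemma all_off_frontier k k' (P Q : nat -> bool) : k <= k' ->
  {in gtn (4 * k + 2), P =1 Q} ->
  all (fun p => [|| P p.1, P p.2, frontier k' p.1 | frontier k' p.2]) (chain_edges js k)
  = all (fun p => Q p.1 || Q p.2) (chain_edges js k).
Proof.
move=> kk' PQ; apply: eq_in_all => -[p1 p2] pE.
have /allP/(_ _ pE)/andP [/= p1_lt p2_lt] := chain_edges_bounded k.
rewrite /frontier /= !PQ ?inE //; have -> : (4 * k' + 2 <= p1) = false by lia.
have -> : (4 * k' + 2 <= p2) = false by lia.
by rewrite /= !orbF.
Qed.

Lemma covered_hex_below k t v : v < 4 * k + 2 -> covered (hex_edges js k.+1) t v = false.
Proof.
move=> vk; apply/negbTE/hasP => -[[p1 p2] /mem_mask pH].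
have /allP/(_ _ pH) : all (fun p => (4 * k + 2 <= p.1) && (4 * k + 2 <= p.2)) (hex_edges js k.+1).
  by rewrite hex_edgesE /=; lia.
by rewrite /incident /=; lia.
Qed.

Lemma maximal_mask_split k b :
  maximal_mask (chain_edges js k.+1) b = partial_ok k b && closing_ok (boundary_of k b).
Proof.
rewrite /maximal_mask /partial_ok /boundary_of /closing_ok -andbA; congr (_ && _).
set E := chain_edges js k.+1; set c := covered E b.
have /andP [a_lt b_lt] := attach_lt k.
rewrite /E chain_edgesS !all_cat -andbA.
rewrite (@all_off_frontier k k c c) //; congr (_ && _); rewrite hex_edgesE /= /frontier.
move: a_lt b_lt; set a0 := (attach js k).1; set b0 := (attach js k).2 => a_lt b_lt.
rewrite !(leqNgt (4 * k + 2) a0) !(leqNgt (4 * k + 2) b0) a_lt b_lt.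
rewrite !leqnn /= !(leq_add2l, andbT, orbT) /=.
by case: (c a0); case: (c b0); case: (c (4 * k + 2)); case: (c (4 * k + 3));
   case: (c (4 * k + 4)); case: (c (4 * k + 5)).
Qed.

Lemma covered_beyond k b v : 4 * k + 6 <= v -> covered (chain_edges js k.+1) b v = false.
Proof.
move=> kv; apply/negbTE/hasP => -[[p1 p2] /mem_mask pE].
by have /allP/(_ _ pE) := chain_edges_bounded k.+1; rewrite /incident /=; lia.
Qed.

Lemma partial_okS k b t : size b = size (chain_edges js k.+1) -> size t = 5 ->
  partial_ok k.+1 (b ++ t) = partial_ok k b && step_ok (js k) (boundary_of k b) t.
Proof.
move=> sb; case: t => [|t1 [|t2 [|t3 [|t4 [|t5 [|]]]]]] // _; set T := [:: t1; t2; t3; t4; t5].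
have beyond := @covered_beyond k b; have below := @covered_hex_below k T.
have /andP [a_lt b_lt] := attach_lt k; have j_le2 := js_le2 k.
rewrite /partial_ok /boundary_of (chain_edgesS js k.+1).
set E1 := chain_edges js k.+1 in sb beyond *.
have allE1 P : all P E1 = all P (chain_edges js k) && all P (hex_edges js k).
  by rewrite /E1 chain_edgesS all_cat.
rewrite mask_cat // pairwise_cat allrel_edge_disjoint all_cat !allE1.
rewrite (@all_off_frontier k k.+1 _ (covered E1 b)) //; last first.
  by move=> v; rewrite inE => vk; rewrite covered_cat // below ?orbF.
rewrite (@all_off_frontier k k (covered E1 b) (covered E1 b)) // !hex_edgesE.
have -> : attach js k.+1 = (4 * k + 2 + js k, 4 * k + 3 + js k) by [].
clearbody E1; move: (chain_edges js k) (attach js k) (js k) j_le2 a_lt b_lt =>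
  E0 [a0 b0] j j_le2 /= a_lt b_lt.
have fold_cov v : has (incident v) (mask b E1) = covered E1 b v by [].
rewrite all_mask5 pairwise_mask5 /= !fold_cov !(covered_cat _ _ _ sb) !covered5.
rewrite /edge_disjoint /incident /frontier /=.
have new_free i : 2 <= i -> covered E1 b (4 * k.+1 + i) = false.
  by move=> ?; apply: beyond; lia.
rewrite !new_free //; clear new_free fold_cov beyond below allE1 T.
(* What is left is, for each kink [j], an identity between boolean formulas in
   13 atoms, which is checked on its truth table. *)
rewrite mulnSr; move: (4 * k) a_lt b_lt => x a_lt b_lt.
case: j j_le2 => [|[|[|j]]] // _; rewrite -!addnA /=; decide_nat_tests;
  rewrite /= ?andbT ?andbF ?orbT ?orbF ?andTb ?andFb ?orTb ?orFb;
  move: (pairwise _ _) (all _ E0) (covered E1 b a0) (covered E1 b b0)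
    (covered E1 b (x + 2)) (covered E1 b (x + 3)) (covered E1 b (x + 4))
    (covered E1 b (x + 5)) => pw old ca cb c2 c3 c4 c5;
  move: c2 c3 c4 c5 ca cb t5 t4 t3 t2 t1 old pw; clear;
  by apply: truth_table_eq13P; vm_compute.
Qed.

Lemma boundary_ofS k b t : size b = size (chain_edges js k.+1) -> size t = 5 ->
  boundary_of k.+1 (b ++ t) = step_boundary (js k) (boundary_of k b) t.
Proof.
move=> sb; case: t => [|t1 [|t2 [|t3 [|t4 [|t5 [|]]]]]] // _.
rewrite /boundary_of /step_boundary (chain_edgesS js k.+1) hex_edgesE.
have -> : attach js k.+1 = (4 * k + 2 + js k, 4 * k + 3 + js k) by [].
have := js_le2 k; have := @covered_beyond k b.
move: (js k) (chain_edges js k.+1) sb => j E sb beyond j_le2.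
rewrite !covered_cat // !covered5 /incident /=.
rewrite !(beyond (4 * k.+1 + 2)) ?(beyond (4 * k.+1 + 3)) ?(beyond (4 * k.+1 + 4))
        ?(beyond (4 * k.+1 + 5)); try lia.
by case: j j_le2 => [|[|[|j]]] // _; rewrite -!addnA /=; congr (_, _, _, _, _, _); lia.
Qed.

End Chain.

Definition encode (sp : boundary * bool) : nat :=
  let: ((c1, c2, c3, c4, na, nb), p) := sp in
  c1 + 2 * (c2 + 2 * (c3 + 2 * (c4 + 2 * (na + 2 * (nb + 2 * p))))).

Definition decode (n : nat) : boundary * bool :=
  ((odd n, odd n./2, odd n./2./2, odd n./2./2./2, odd n./2./2./2./2, odd n./2./2./2./2./2),
   odd n./2./2./2./2./2./2).

Lemma encodeK : cancel encode decode.
Proof. by case=> [[[[[[[] []] []] []] []] []] []]. Qed.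

Lemma encode_lt sp : encode sp < 128.
Proof. by case: sp => [[[[[[[] []] []] []] []] []] []]. Qed.

(* Entry [encode (s, p)] of [completion_table js m] counts the ways of adding
   [m] hexagons to a chain with boundary [s] whose last hexagon has parity [p],
   and closing it off as a maximal matching. *)
Fixpoint completion_table (js : nat -> nat) (m : nat) : seq nat :=
  if m is m'.+1 then
    let tab := completion_table js m' in
    [seq let: (s, p) := decode i in
         sumn [seq step_ok (js p) s t * nth 0 tab (encode (step_boundary (js p) s t, ~~ p))
              | t <- bool_seqs 5]
    | i <- iota 0 128]
  else [seq (closing_ok (decode i).1 : nat) | i <- iota 0 128].

Definition completions js m sp := nth 0 (completion_table js m) (encode sp).

Lemma completions0 js sp : completions js 0 sp = closing_ok sp.1.
Proof.
by rewrite /completions /completion_table (nth_map 0) ?size_iota ?encode_lt // nth_iota ?encode_lt // encodeK.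
Qed.

Lemma completionsS js m s p : completions js m.+1 (s, p) =
  \sum_(t <- bool_seqs 5) step_ok (js p) s t * completions js m (step_boundary (js p) s t, ~~ p).
Proof.
rewrite /completions {1}/completion_table -/completion_table (nth_map 0) ?size_iota ?encode_lt //.
by rewrite nth_iota ?encode_lt // add0n encodeK sumnE big_map.
Qed.

Lemma completions_recurrence js (cs : seq (nat * nat)) d :
  (forall sp, completions js d sp = \sum_(c <- cs) c.1 * completions js (d - c.2) sp) ->
  forall m sp,
    completions js (m + d) sp = \sum_(c <- cs) c.1 * completions js (m + (d - c.2)) sp.
Proof.
move=> base; elim=> [|m IH] [s p]; first by rewrite add0n base.
rewrite addSn completionsS; under eq_bigr => t _ do rewrite IH big_distrr.
rewrite exchange_big; apply: eq_bigr => c _.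
by rewrite addSn completionsS big_distrr; apply: eq_bigr => t _; apply: mulnCA.
Qed.

(* The [let]s make [vm_compute] build each table once, not once per entry. *)
Definition recurrence_holds js (cs : seq (nat * nat)) d : bool :=
  let tab := completion_table js d in
  let tabs := [seq (c.1, completion_table js (d - c.2)) | c <- cs] in
  all (fun i => nth 0 tab i == sumn [seq ct.1 * nth 0 ct.2 i | ct <- tabs]) (iota 0 128).

Lemma recurrence_holdsP js cs d : recurrence_holds js cs d ->
  forall sp, completions js d sp = \sum_(c <- cs) c.1 * completions js (d - c.2) sp.
Proof.
move=> /allP rec sp; rewrite /completions.
have sp_code : encode sp \in iota 0 128 by rewrite mem_iota encode_lt.
by have /eqP -> := rec _ sp_code; rewrite sumnE !big_map.
Qed.

Lemma linear_recurrence_shift (f g : nat -> nat) (cs : seq (nat * nat)) d :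
  (forall n, f n.+1 = g n) -> all (fun c => c.2 <= d) cs ->
  (forall m, g (m + d) = \sum_(c <- cs) c.1 * g (m + (d - c.2))) ->
  f d = \sum_(c <- cs) c.1 * f (d - c.2) ->
  forall n, d <= n -> f n = \sum_(c <- cs) c.1 * f (n - c.2).
Proof.
move=> fg lags grec base n; rewrite leq_eqVlt => /orP [/eqP <- // | dn].
have [m ->] : exists m, n = (m + d).+1 by exists (n - d.+1); lia.
rewrite fg grec; apply: eq_big_seq => c /(allP lags) lag_le.
by rewrite -fg; congr (_ * f _); lia.
Qed.

Section ChainCount.
Variable js : nat -> nat.
Hypothesis js_le2 : forall i, js i <= 2.
Hypothesis js_periodic : forall i, js i = js (odd i).

Definition chain_count k m :=
  \sum_(b <- bool_seqs (size (chain_edges js k.+1)))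
     partial_ok js k b * completions js m (boundary_of js k b, odd k).

Lemma chain_countS k m : chain_count k.+1 m = chain_count k m.+1.
Proof.
rewrite /chain_count.
have -> : size (chain_edges js k.+2) = size (chain_edges js k.+1) + 5.
  by rewrite !size_chain_edges; lia.
rewrite big_bool_seqsD; apply: eq_big_seq => b; rewrite mem_bool_seqs => /eqP sb.
rewrite completionsS big_distrr; apply: eq_big_seq => t; rewrite mem_bool_seqs => /eqP st.
rewrite -js_periodic partial_okS // boundary_ofS // [odd k.+1]/=.
by case: (partial_ok js k b) => /=; rewrite ?mul0n ?mul1n.
Qed.

Lemma Psi_chain_count k : Psi (chain_rel js k.+1) = chain_count 0 k.
Proof.
have shift m : chain_count k m = chain_count 0 (k + m).
  by elim: k m => [|k IH] m //; rewrite chain_countS IH addSnnS.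
rewrite -[k]addn0 -shift addn0.
rewrite (@Psi_maximal_masks _ _ (chain_edges js k.+1)) //; last first.
- exact: uniq_chain_edge_keys.
- exact: chain_edges_bounded.
by apply: eq_big_seq => b _; rewrite maximal_mask_split // completions0 mulnb.
Qed.

(* [\big] does not reduce under [vm_compute]; the [let] builds the table once. *)
Lemma Psi_chain_sumn k : Psi (chain_rel js k.+1) =
  let tab := completion_table js k in
  sumn [seq partial_ok js 0 b * nth 0 tab (encode (boundary_of js 0 b, false)) | b <- bool_seqs 6].
Proof. by rewrite Psi_chain_count /chain_count sumnE big_map. Qed.

Lemma chain_count_recurrence cs d :
  (forall sp, completions js d sp = \sum_(c <- cs) c.1 * completions js (d - c.2) sp) ->
  forall m, chain_count 0 (m + d) = \sum_(c <- cs) c.1 * chain_count 0 (m + (d - c.2)).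
Proof.
move=> /completions_recurrence rec m; rewrite /chain_count.
under eq_bigr => b _ do rewrite rec big_distrr.
rewrite exchange_big; apply: eq_bigr => c _.
by rewrite big_distrr; apply: eq_bigr => b _; apply: mulnCA.
Qed.

Lemma chain_recurrence (f : nat -> nat) cs d :
  (forall n, f n.+1 = Psi (chain_rel js n.+1)) ->
  recurrence_holds js cs d -> all (fun c => c.2 <= d) cs ->
  f d = \sum_(c <- cs) c.1 * f (d - c.2) ->
  forall n, d <= n -> f n = \sum_(c <- cs) c.1 * f (n - c.2).
Proof.
move=> fPsi /recurrence_holdsP/chain_count_recurrence rec lags base.
by apply: (linear_recurrence_shift (g := chain_count 0)) => // n; rewrite fPsi Psi_chain_count.
Qed.

End ChainCount.

Lemma zigzag_js_le2 i : zigzag_js i <= 2.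
Proof. by rewrite /zigzag_js; case: odd. Qed.

Lemma zigzag_js_periodic i : zigzag_js i = zigzag_js (odd i).
Proof. by rewrite /zigzag_js; case: odd. Qed.

Lemma ell_values : [/\ ell 1 = 5, ell 2 = 20, ell 3 = 79, ell 4 = 317 & ell 5 = 1274].
Proof. by split; rewrite /= Psi_chain_sumn //; vm_compute. Qed.

Lemma zz_values : [/\ zz 1 = 5, zz 2 = 20, zz 3 = 75, zz 4 = 288 &
                      [/\ zz 5 = 1105, zz 6 = 4234 & zz 7 = 16226]].
Proof.
by split; [..|split]; rewrite /= (Psi_chain_sumn zigzag_js_le2 zigzag_js_periodic);
   vm_compute.
Qed.

Lemma hh_values : [/\ hh 1 = 5, hh 2 = 20, hh 3 = 75, hh 4 = 288 &
                      [/\ hh 5 = 1094, hh 6 = 4171 & hh 7 = 15897]].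
Proof. by split; [..|split]; rewrite /= Psi_chain_sumn //; vm_compute. Qed.


Lemma polyacene_recurrence : recurrence_holds polyacene_js [:: (4, 1); (1, 4); (1, 5)] 5.
Proof. by vm_compute. Qed.

Lemma zigzag_recurrence : recurrence_holds zigzag_js
  [:: (3, 1); (1, 2); (6, 3); (7, 4); (7, 5); (5, 6); (1, 7)] 7.
Proof. by vm_compute. Qed.

Lemma helicene_recurrence : recurrence_holds helicene_js
  [:: (1, 1); (7, 2); (12, 3); (6, 4); (7, 5); (4, 6); (2, 7)] 7.
Proof. by vm_compute. Qed.

Lemma ell_rec n : 5 <= n ->
  ell n = \sum_(c <- [:: (4, 1); (1, 4); (1, 5)]) c.1 * ell (n - c.2).
Proof.
have [e1 _ _ e4 e5] := ell_values.
by apply: (chain_recurrence _ _ _ polyacene_recurrence); rewrite // !big_cons big_nil e5 e4 e1.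
Qed.

Lemma zz_rec n : 7 <= n ->
  zz n = \sum_(c <- [:: (3, 1); (1, 2); (6, 3); (7, 4); (7, 5); (5, 6); (1, 7)]) c.1 * zz (n - c.2).
Proof.
have [z1 z2 z3 z4 [z5 z6 z7]] := zz_values.
apply: (chain_recurrence zigzag_js_le2 zigzag_js_periodic _ zigzag_recurrence) => //.
by rewrite !big_cons big_nil z7 z6 z5 z4 z3 z2 z1.
Qed.

Lemma hh_rec n : 7 <= n ->
  hh n = \sum_(c <- [:: (1, 1); (7, 2); (12, 3); (6, 4); (7, 5); (4, 6); (2, 7)]) c.1 * hh (n - c.2).
Proof.
have [h1 h2 h3 h4 [h5 h6 h7]] := hh_values.
by apply: (chain_recurrence _ _ _ helicene_recurrence); rewrite // !big_cons big_nil h7 h6 h5 h4 h3 h2 h1.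
Qed.

Theorem corollary4p5 :
  [/\ (forall n, 5 <= n ->
         ell n = 4 * ell (n - 1) + ell (n - 4) + ell (n - 5))
      /\ [/\ ell 0 = 1, ell 1 = 5, ell 2 = 20, ell 3 = 79 & ell 4 = 317],
      (forall n, 7 <= n ->
         zz n = 3 * zz (n - 1) + zz (n - 2) + 6 * zz (n - 3) + 7 * zz (n - 4)
                + 7 * zz (n - 5) + 5 * zz (n - 6) + zz (n - 7))
      /\ (zz 0 = 1 /\ zz 1 = 5 /\ zz 2 = 20 /\ zz 3 = 75 /\ zz 4 = 288
          /\ zz 5 = 1105 /\ zz 6 = 4234) &
      (forall n, 7 <= n ->
         hh n = hh (n - 1) + 7 * hh (n - 2) + 12 * hh (n - 3) + 6 * hh (n - 4)
                + 7 * hh (n - 5) + 4 * hh (n - 6) + 2 * hh (n - 7))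
      /\ (hh 0 = 1 /\ hh 1 = 5 /\ hh 2 = 20 /\ hh 3 = 75 /\ hh 4 = 288
          /\ hh 5 = 1094 /\ hh 6 = 4171)].
Proof.
have [l1 l2 l3 l4 _] := ell_values.
have [z1 z2 z3 z4 [z5 z6 _]] := zz_values.
have [h1 h2 h3 h4 [h5 h6 _]] := hh_values.
split; split; try by do !split.
- by move=> n /ell_rec ->; rewrite !big_cons big_nil /= !mul1n addn0 !addnA.
- by move=> n /zz_rec ->; rewrite !big_cons big_nil /= !mul1n addn0 !addnA.
- by move=> n /hh_rec ->; rewrite !big_cons big_nil /= !mul1n addn0 !addnA.
Qed.
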